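(* Let $\alpha\in[0,1]$ and let $\mathbf{d}'$ be a delay function that is $\alpha$-bounded by a delay function $\mathbf{d}$. If $\alpha\le\frac{1}{2\cdot\mathrm{CB}(\#,\mathbf{d})\cdot|S'|}$, then $$E_{\mathcal{M}(\mathbf{d}')}\le E_{\mathcal{M}(\mathbf{d})}+2\cdot\alpha\cdot\mathrm{CB}(\#,\mathbf{d})\cdot\big(1+\mathrm{CB}(c,\mathbf{d})\cdot|S'|\big).$$
   Context: $C=(S,\lambda,\mathrm{P},S_{fd},\mathrm{F},s_{in})$ is a fdCTMC structure ($S$ finite, $\lambda>0$, $\mathrm{P}\in\mathbb{R}_{\ge0}^{S\times S}$, $\mathrm{F}\in\mathbb{R}_{\ge0}^{S_{fd}\times S}$ stochastic) with a cost structure $(G,\mathcal{R},\mathcal{I}_{\mathrm{P}},\mathcal{I}_{\mathrm{F}})$, $\mathcal{R}(s)>0$ for all $s$. For a delay function $\mathbf{d}:S_{fd}\to\mathbb{R}_{>0}$, $C(\mathbf{d})$ evolves from $(s_i,d_i)$ ($d_0=\mathbf{d}(s_{in})$ or $\infty$) by sampling an $\mathrm{Exp}(\lambda)$ time $t_i$; if $t_i<d_i$, $s_{i+1}\sim\mathrm{P}(s_i,\cdot)$, $d_{i+1}=d_i-t_i$ if $s_i,s_{i+1}\in S_{fd}$, $\mathbf{d}(s_{i+1})$ if $s_{i+1}\in S_{fd}\not\ni s_i$, $\infty$ if $s_{i+1}\notin S_{fd}$; otherwise $t_i=d_i$, $s_{i+1}\sim\mathrm{F}(s_i,\cdot)$,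 $d_{i+1}=\mathbf{d}(s_{i+1})$ or $\infty$. The cost of a run is $\sum_{i<n}(t_i\mathcal{R}(s_i)+I_i)$ up to the first $n>0$ with $s_n\in G$ ($I_i$ the $\mathcal{I}_{\mathrm{P}}$/$\mathcal{I}_{\mathrm{F}}$ impulse of the transition; $\infty$ if $G$ is never reached). Standing assumption: $S_{fd}=S^{reset}\uplus S^{keep}$ where $S^{reset}$ are the states entered by exp-delay transitions from $S\setminus S_{fd}$ or by fixed-delay transitions and $S^{keep}$ those entered by exp-delay transitions from $S_{fd}$; $s_{in}\in S^{reset}$ if $s_{in}\in S_{fd}$. $S'=S^{reset}\cup(S\setminus S_{fd})\cup G$. DTMDP $\mathcal{M}$: vertices $S'$, goal vertices $G$, actions $\mathbb{R}_{>0}$ enabled in $S^{reset}$ and $\infty$ enabled in $S\setminus S_{fd}$; for action $d$ in $s$, $T(s,d)(s')$ is the probability, in $C$ started in $s$ with delay $d$ set in $s$, that the first $S'$-state visited after at least one transition is $s'$, and $c(s,d)$ is the expected cost accumulated until then. Delay functions are memoryless strategies of $\mathcal{M}$; $\mathcal{M}[s]$ is $\mathcal{M}$ started in $s$; for a one-step cost function $\$$ on actions, $E^{\$}_{\mathcal{M}[s](\mathbf{d})}$ is the expected accumulated $\$$ before reaching $G$; $E_{\mathcal{M}(\mathbf{d})}=E^{c}_{\mathcal{M}[s_{in}](\mathbf{d})}$; $\mathrm{CB}(\$,\mathbf{d})=\max_{s\in S'}E^{\$}_{\mathcal{M}[s](\mathbf{d})}$; $\#$ assigns $1$ to every action. A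 delay function $\mathbf{d}^\star$ is $\alpha$-bounded by $\mathbf{d}$ if for all $s,t\in S'$: $|T(s,\mathbf{d}^\star(s))(t)-T(s,\mathbf{d}(s))(t)|\le\alpha$, $c(s,\mathbf{d}^\star(s))-c(s,\mathbf{d}(s))\le\alpha$, and $T(s,\mathbf{d}(s))(t)=0$ iff $T(s,\mathbf{d}^\star(s))(t)=0$. *)

From HB Require Import structures.
From mathcomp Require Import all_boot all_order all_algebra.
From mathcomp Require Import all_classical all_reals.
From mathcomp Require Import topology ereal normedtype sequences exp.
Set Implicit Arguments. Unset Strict Implicit. Unset Printing Implicit Defensive.
Import Order.TTheory GRing.Theory Num.Theory numFieldNormedType.Exports.
Local Open Scope ring_scope.

Record fdCTMC (R : realType) (S : finType) := FdCTMC {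
  rate : R;
  Pm : S -> S -> R;      (* P : exp-delay transition matrix *)
  Sfd : {set S};
  Fm : S -> S -> R;      (* F : fixed-delay transitions (meaningful on S_fd rows) *)
  sin : S }.

Record costs (R : realType) (S : finType) := Costs {
  goal : {set S};
  rew : S -> R;          (* rate cost R *)
  impP : S -> S -> R;
  impF : S -> S -> R }.

Section Defs.
Variables (R : realType) (S : finType) (C : fdCTMC R S) (K : costs R S).

Definition is_reset (s : S) : bool :=
  (s \in Sfd C) &&
  [|| s == sin C,
      [exists u, (u \notin Sfd C) && (0 < Pm C u s)] |
      [exists u, (u \in Sfd C) && (0 < Fm C u s)]].

Definition is_keep (s : S) : bool :=
  (s \in Sfd C) && [exists u, (u \in Sfd C) && (0 < Pm C u s)].

Definition Sprime (s : S) : bool :=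
  [|| is_reset s, s \notin Sfd C | s \in goal K].

Definition wf : Prop :=
  [/\ 0 < rate C,
      (forall s t, 0 <= Pm C s t) /\ (forall s, \sum_t Pm C s t = 1),
      (forall s t, s \in Sfd C -> 0 <= Fm C s t) /\
      (forall s, s \in Sfd C -> \sum_t Fm C s t = 1),
      (forall s, 0 < rew K s) /\ (forall s t, 0 <= impP K s t) /\
      (forall s t, 0 <= impF K s t)
    & (* standing assumption: S_fd = S^reset (disjoint union) S^keep, s_in in S^reset *)
      forall s, s \in Sfd C -> is_reset s (+) is_keep s ].

(* delay function d : S_fd -> R_{>0} (values outside S_fd are irrelevant) *)
Definition delay_fun (d : S -> R) : Prop := forall s, s \in Sfd C -> 0 < d s.

(* states visited strictly inside a fixed-delay period, not in S' *)
Definition Nst (s : S) : bool := (s \in Sfd C) && ~~ Sprime s.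

(* Poisson(lambda d) probability of exactly n exp-events in time d *)
Definition pois (d : R) (n : nat) : R :=
  expR (- (rate C * d)) * (rate C * d) ^+ n / n`!%:R.
(* probability of at least n+1 exp-events in time d *)
Definition ptail (d : R) (n : nat) : R := 1 - \sum_(k < n.+1) pois d k.

(* walk s n u = probability that the embedded jump chain started in s is in u
   after n jumps, all intermediate states (after the first) being in Nst. *)
Fixpoint walk (s : S) (n : nat) : S -> R :=
  match n with
  | 0 => fun u => (u == s)%:R
  | m.+1 => fun v => (Nst v)%:R * \sum_u walk s m u * Pm C u v
  end.

Definition rsum (f : nat -> R) : R := limn (series f).

(* actions: Some d (delay d) for states in S_fd, None (= infinity) otherwise *)
Definition act (d : S -> R) (s : S) : option R :=
  if s \in Sfd C then Some (d s) else None.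

Definition Tm (s : S) (a : option R) (t : S) : R :=
  if ~~ Sprime t then 0 else
  match a with
  | Some d => rsum (fun n => \sum_u walk s n u *
                (pois d n * Fm C u t + ptail d n * Pm C u t))
  | None => Pm C s t
  end.

(* c(s,a): expected cost accumulated until the first S'-state *)
Definition cm (s : S) (a : option R) : R :=
  match a with
  | Some d => rsum (fun n => \sum_u walk s n u *
                (ptail d n * (rew K u / rate C + \sum_v Pm C u v * impP K u v)
                 + pois d n * \sum_v Fm C u v * impF K u v))
  | None => rew K s / rate C + \sum_v Pm C s v * impP K s v
  end.

Definition pcount : S -> option R -> R := fun _ _ => 1.
Definition pcost : S -> option R -> R := cm.

(* distribution of M[s](d) at step n, restricted to runs not having visited G *)
Fixpoint dist (d : S -> R) (s : S) (n : nat) : S -> R :=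
  match n with
  | 0 => fun u => ((u == s) && (u \notin goal K))%:R
  | m.+1 => fun v => (Sprime v && (v \notin goal K))%:R *
                     \sum_u dist d s m u * Tm u (act d u) v
  end.

Definition Eacc (pay : S -> option R -> R) (d : S -> R) (s : S) : \bar R :=
  (\sum_(n <oo) ((\sum_u dist d s n u * pay u (act d u))%:E))%E.

Definition Etot (d : S -> R) : \bar R := Eacc pcost d (sin C).

Definition CB (pay : S -> option R -> R) (d : S -> R) : \bar R :=
  (\big[maxe/0%E]_(s | Sprime s) Eacc pay d s)%E.

Definition cardSp : R := #|[set s | Sprime s]|%:R.

(* d* is alpha-bounded by d (quantified over s in S' having an enabled action) *)
Definition alpha_bounded (alpha : R) (dstar d : S -> R) : Prop :=
  forall s t, Sprime s -> (is_reset s || (s \notin Sfd C)) -> Sprime t ->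
    [/\ `|Tm s (act dstar s) t - Tm s (act d s) t| <= alpha,
        cm s (act dstar s) - cm s (act d s) <= alpha
      & (Tm s (act d s) t == 0) = (Tm s (act dstar s) t == 0)].

End Defs.

(* Let X and Y be the expected cost and the expected number of steps under d,
   and D = alpha (1 + CB(c,d) |S'|). By induction on n, the expected cost of the
   first n steps under d' from any s in S' is at most X s + 2 D Y s. In the
   inductive step, one step under d' costs at most alpha more than under d, and
   each transition probability exceeds the one under d by at most alpha, so the
   excess mass adds at most alpha |S'| (CB(c,d) + 2 D CB(#,d)), which is at most
   alpha CB(c,d) |S'| + D because 2 alpha CB(#,d) |S'| <= 1. Together with the
   extra alpha this is 2 D, exactly what the current step contributes to 2 D Y s
   in the Bellman equation of d. Letting n tend to infinity at s_in and bounding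
   Y s_in by CB(#,d) gives the theorem. *)
From HB Require Import structures.
From mathcomp Require Import all_boot all_order all_algebra ssrAC.
From mathcomp Require Import all_classical all_reals.
From mathcomp Require Import topology ereal normedtype sequences exp.
From mathcomp Require Import ring lra.
Import Order.TTheory GRing.Theory Num.Theory numFieldNormedType.Exports.
Local Open Scope ring_scope.

Lemma rsum_ge0 (R : realType) (f : nat -> R) : (forall n, 0 <= f n) -> 0 <= rsum f.
Proof.
move=> f0; rewrite /rsum.
have [cv|ncv] := pselect (cvgn (series f)); last by rewrite (dvgP ncv).
apply: limr_ge => //; apply: nearW => n.
by rewrite /series /=; apply: sumr_ge0 => i _; apply: f0.
Qed.

Lemma sum_exp_coeff_le_expR (R : realType) (x : R) n : 0 <= x ->
  \sum_(k < n) x ^+ k / k`!%:R <= expR x.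
Proof.
move=> x0.
have := nondecreasing_cvgn_le _ (is_cvg_series_exp_coeff x) n.
rewrite /series /= big_mkord; apply.
apply/nondecreasing_seqP => m; rewrite /series /= big_nat_recr //= lerDl.
by rewrite /exp_coeff /= divr_ge0 // exprn_ge0.
Qed.

Section Budget.
Local Open Scope ereal_scope.

Lemma budget_le (R : realType) (al Cc B k D : \bar R) :
  0 <= al -> 0 <= Cc -> 0 <= B -> 0 <= k -> 2%:E * al * B * k <= 1 ->
  D = al * (1 + Cc * k) -> al + al * (k * (Cc + 2%:E * D * B)) <= 2%:E * D.
Proof.
move=> al0 Cc0 B0 k0 hB DE.
have D0 : 0 <= D by rewrite DE mule_ge0 // adde_ge0 // mule_ge0.
have -> : al * (k * (Cc + 2%:E * D * B)) = al * (Cc * k) + D * (2%:E * al * B * k).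
  rewrite ge0_muleDr ?mule_ge0 // ge0_muleDr ?mule_ge0 // [k * Cc]muleC.
  by congr (_ + _); rewrite [LHS](AC (1*(1*(2*1))) (4*(3*1*5*2))).
rewrite addeA.
have -> : al + al * (Cc * k) = D by rewrite DE ge0_muleDr ?mule1 ?mule_ge0.
have -> : 2%:E * D = D + D by rewrite -mule2n /= mule_natl.
apply: leeD => //.
by rewrite -[leRHS]mule1; apply: lee_wpmul2l.
Qed.

End Budget.

Section Bellman.
Set Implicit Arguments. Unset Strict Implicit.
Variables (R : realType) (S : finType) (C : fdCTMC R S) (K : costs R S).
Hypothesis W : wf C K.

Lemma rate_gt0 : 0 < rate C.
Proof. by case: W. Qed.

Lemma Pm_ge0 s t : 0 <= Pm C s t.
Proof. by case: W => _ [P0 _] _ _ _; apply: P0. Qed.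

Lemma Fm_ge0 s t : s \in Sfd C -> 0 <= Fm C s t.
Proof. by case: W => _ _ [F0 _] _ _; apply: F0. Qed.

Lemma pois_ge0 dd n : 0 <= rate C * dd -> 0 <= pois C dd n.
Proof. by move=> x0; rewrite /pois divr_ge0 // mulr_ge0 ?expR_ge0 // exprn_ge0. Qed.

Lemma ptail_ge0 dd n : 0 <= rate C * dd -> 0 <= ptail C dd n.
Proof.
move=> x0; rewrite /ptail subr_ge0 /pois.
under eq_bigr do rewrite -mulrA.
rewrite -mulr_sumr expRN ler_pdivrMl ?expR_gt0 // mulr1.
exact: sum_exp_coeff_le_expR.
Qed.

Lemma walk_ge0 s n u : 0 <= walk C K s n u.
Proof.
elim: n u => [|n IH] u //=; apply: mulr_ge0 => //.
by apply: sumr_ge0 => v _; rewrite mulr_ge0 ?Pm_ge0.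
Qed.

Lemma walk_neq0_Sfd s n u : s \in Sfd C -> walk C K s n u != 0 -> u \in Sfd C.
Proof.
case: n => [|n] /= sS; first by have [->|] := eqVneq u s; rewrite ?eqxx.
by rewrite /Nst; case: (u \in Sfd C) => //=; rewrite mul0r eqxx.
Qed.

Section Delay.
Variable dd : S -> R.
Hypothesis dd_gt0 : delay_fun C dd.

Lemma rate_delay_ge0 s : s \in Sfd C -> 0 <= rate C * dd s.
Proof. by move=> sS; rewrite mulr_ge0 // ltW // ?rate_gt0 ?dd_gt0. Qed.

Lemma Tm_ge0 s t : 0 <= Tm C K s (act C dd s) t.
Proof.
rewrite /Tm /act; case: (Sprime C K t) => //=.
case sS: (s \in Sfd C); last exact: Pm_ge0.
have x0 := rate_delay_ge0 sS.
apply: rsum_ge0 => n; apply: sumr_ge0 => u _.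
have [->|nz] := eqVneq (walk C K s n u) 0; first by rewrite mul0r.
have uS := walk_neq0_Sfd sS nz.
by rewrite mulr_ge0 ?walk_ge0 // addr_ge0 // mulr_ge0
   ?pois_ge0 ?ptail_ge0 ?Fm_ge0 ?Pm_ge0.
Qed.

Lemma cm_ge0 s : 0 <= cm C K s (act C dd s).
Proof.
case: W => _ _ _ [r0 [iP iF]] _.
have exp_step u : 0 <= rew K u / rate C + \sum_v Pm C u v * impP K u v.
  apply: addr_ge0; first by rewrite divr_ge0 ?ltW ?rate_gt0 ?r0.
  by apply: sumr_ge0 => v _; rewrite mulr_ge0 ?Pm_ge0.
rewrite /cm /act; case sS: (s \in Sfd C) => //.
have x0 := rate_delay_ge0 sS.
apply: rsum_ge0 => n; apply: sumr_ge0 => u _.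
have [->|nz] := eqVneq (walk C K s n u) 0; first by rewrite mul0r.
have uS := walk_neq0_Sfd sS nz.
rewrite mulr_ge0 ?walk_ge0 // addr_ge0 // mulr_ge0 ?ptail_ge0 ?pois_ge0 //.
by apply: sumr_ge0 => v _; rewrite mulr_ge0 ?Fm_ge0.
Qed.

End Delay.

Definition alive v := Sprime C K v && (v \notin goal K).

Lemma aliveP w : alive w ->
  [/\ Sprime C K w, is_reset C w || (w \notin Sfd C) & w \notin goal K].
Proof. by rewrite /alive /Sprime => /andP[/or3P[] -> //= ->]; rewrite orbT. Qed.

Lemma Sprime_sin : Sprime C K (sin C).
Proof. by rewrite /Sprime /is_reset; case: (sin C \in Sfd C); rewrite //= eqxx. Qed.

Definition Tlive dd s w := Tm C K s (act C dd s) w * (alive w)%:R.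

Lemma Tlive_ge0 dd s w : delay_fun C dd -> 0 <= Tlive dd s w.
Proof. by move=> dp; rewrite mulr_ge0 ?Tm_ge0. Qed.

Lemma dist_succ_first dd s n v : dist C K dd s n.+1 v =
  (s \notin goal K)%:R * \sum_w Tlive dd s w * dist C K dd w n v.
Proof.
elim: n v => [|n IH] v.
  rewrite /= (bigD1 s) //= big1 ?addr0 => [|u /negbTE ->]; last by rewrite mul0r.
  rewrite (bigD1 v) //= big1 ?addr0 => [|u /negbTE]; last first.
    by rewrite eq_sym => ->; rewrite mulr0.
  rewrite /Tlive /alive !eqxx /=.
  by case: (Sprime C K v); case: (v \in goal K); case: (s \in goal K);
     rewrite /= ?(mul0r, mulr0, mul1r, mulr1).
have -> : dist C K dd s n.+2 v = (alive v)%:R *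
    \sum_u dist C K dd s n.+1 u * Tm C K u (act C dd u) v by [].
under eq_bigr do rewrite IH mulr_sumr mulr_suml.
rewrite exchange_big !mulr_sumr; apply: eq_bigr => w _ /=.
rewrite !mulr_sumr; apply: eq_bigr => u _; ring.
Qed.

Definition step_pay (pay : S -> option R -> R) dd s n :=
  \sum_u dist C K dd s n u * pay u (act C dd u).

Lemma step_pay0 pay dd s :
  step_pay pay dd s 0 = (s \notin goal K)%:R * pay s (act C dd s).
Proof.
rewrite /step_pay (bigD1 s) //= big1 ?addr0 ?eqxx // => u /negbTE ->.
by rewrite mul0r.
Qed.

Lemma step_pay_succ pay dd s n : step_pay pay dd s n.+1 =
  (s \notin goal K)%:R * \sum_w Tlive dd s w * step_pay pay dd w n.
Proof.
rewrite /step_pay; under eq_bigr do rewrite dist_succ_first mulr_sumr mulr_suml.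
rewrite exchange_big !mulr_sumr; apply: eq_bigr => w _ /=.
rewrite !mulr_sumr; apply: eq_bigr => u _; ring.
Qed.

Lemma dist_ge0 dd s n u : delay_fun C dd -> 0 <= dist C K dd s n u.
Proof.
move=> dp; elim: n u => [|n IH] u //=.
by rewrite mulr_ge0 //; apply: sumr_ge0 => w _; rewrite mulr_ge0 ?Tm_ge0.
Qed.

Lemma step_pay_ge0 pay dd s n : delay_fun C dd ->
  (forall u, 0 <= pay u (act C dd u)) -> 0 <= step_pay pay dd s n.
Proof. by move=> dp hp; apply: sumr_ge0 => u _; rewrite mulr_ge0 ?dist_ge0. Qed.

Definition partial_pay pay dd s n := \sum_(k < n) step_pay pay dd s k.

Lemma partial_pay_succ pay dd s n : partial_pay pay dd s n.+1 =
  (s \notin goal K)%:R *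
    (pay s (act C dd s) + \sum_w Tlive dd s w * partial_pay pay dd w n).
Proof.
rewrite /partial_pay big_ord_recl step_pay0 mulrDr; congr (_ + _).
under eq_bigr do rewrite /bump /= step_pay_succ.
rewrite -mulr_sumr exchange_big; congr (_ * _).
by apply: eq_bigr => w _; rewrite mulr_sumr.
Qed.

Lemma Sprime_card : \sum_w (Sprime C K w)%:R = cardSp C K :> R.
Proof.
rewrite /cardSp (eq_bigr (fun w => if Sprime C K w then 1 else 0)) => [|w _].
  by rewrite -big_mkcond /= sumr_const cardsE.
by case: (Sprime C K w).
Qed.

Local Open Scope ereal_scope.

Lemma Eacc_ge0 pay dd s : delay_fun C dd ->
  (forall u, (0 <= pay u (act C dd u))%R) -> 0 <= Eacc C K pay dd s.
Proof.
by move=> dp hp; apply: nneseries_ge0 => n _ _; rewrite lee_fin step_pay_ge0.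
Qed.

Lemma Eacc_bellman pay dd s : delay_fun C dd ->
  (forall u, (0 <= pay u (act C dd u))%R) -> s \notin goal K ->
  Eacc C K pay dd s = (pay s (act C dd s))%:E +
    \sum_w (Tlive dd s w)%:E * Eacc C K pay dd w.
Proof.
move=> dp hp sG.
have t0 w n : 0 <= (step_pay pay dd w n)%:E by rewrite lee_fin step_pay_ge0.
rewrite /Eacc -/(step_pay pay dd s) nneseries_recl => [|k _|] //; last exact: t0.
rewrite -/(step_pay pay dd s 0) step_pay0 sG mul1r.
congr (_ + _); rewrite -nneseries_addn => [|i]; last exact: t0.
transitivity (\sum_(i <oo) \sum_w (Tlive dd s w)%:E * (step_pay pay dd w i)%:E).
  apply: eq_eseriesr => i _; rewrite addn1 -/(step_pay pay dd s _) step_pay_succ.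
  by rewrite sG mul1r -sumEFin; apply: eq_bigr => w _; rewrite EFinM.
rewrite nneseries_sum => [|w i _]; last by rewrite mule_ge0 // lee_fin Tlive_ge0.
by apply: eq_bigr => w _; rewrite nneseriesZl // => i _; apply: t0.
Qed.

Lemma Eacc_combination_bellman dd k s : delay_fun C dd -> 0 <= k -> alive s ->
  Eacc C K (pcost C K) dd s + k * Eacc C K (@pcount R S) dd s =
  (cm C K s (act C dd s))%:E + k +
    \sum_w (Tlive dd s w)%:E *
      (Eacc C K (pcost C K) dd w + k * Eacc C K (@pcount R S) dd w).
Proof.
move=> dp k0 /aliveP[_ _ sG].
have cm0 u : (0 <= pcost C K u (act C dd u))%R by apply: cm_ge0.
have c10 u : (0 <= @pcount R S u (act C dd u))%R by apply: ler01.
have X0 w := Eacc_ge0 w dp cm0.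
have Y0 w := Eacc_ge0 w dp c10.
have T0 w : 0 <= (Tlive dd s w)%:E by rewrite lee_fin Tlive_ge0.
rewrite (Eacc_bellman dp cm0 sG) (Eacc_bellman dp c10 sG).
rewrite ge0_muleDr ?sume_ge0 // => [|w _]; last by rewrite mule_ge0.
rewrite mule1 ge0_sume_distrr => [|w _]; last by rewrite mule_ge0.
under [in RHS]eq_bigr do rewrite ge0_muleDr ?mule_ge0 // muleCA.
by rewrite big_split /= [RHS](AC (2*2) (1*3*(2*4))).
Qed.

Lemma sum_alive_le (Z : S -> \bar R) M : 0 <= M -> (forall w, 0 <= Z w) ->
  (forall w, Sprime C K w -> Z w <= M) ->
  \sum_w ((alive w)%:R)%:E * Z w <= (cardSp C K)%:E * M.
Proof.
move=> M0 Z0 ZM; rewrite -Sprime_card -sumEFin.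
rewrite ge0_sume_distrl => [|w _]; last by rewrite lee_fin.
apply: lee_sum => w _; case aw: (alive w); last first.
  by rewrite mul0e mule_ge0 // lee_fin.
by have [wS _ _] := aliveP aw; rewrite wS !mul1e ZM.
Qed.

Lemma Eacc_le_CB pay dd w : Sprime C K w -> Eacc C K pay dd w <= CB C K pay dd.
Proof. by move=> wS; apply: (le_bigmax_cond _ _ wS). Qed.

Lemma CB_ge0 pay dd : 0 <= CB C K pay dd.
Proof. exact: bigmax_ge_id. Qed.

Section Perturbation.
Variables (alpha : R) (d d' : S -> R).
Hypotheses (d_gt0 : delay_fun C d) (d'_gt0 : delay_fun C d').
Hypotheses (alpha_ge0 : (0 <= alpha)%R) (bounded : alpha_bounded C K alpha d' d).

Lemma sum_Tlive_perturbed_le s (P : S -> R) (Z : S -> \bar R) : alive s ->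
  (forall w, (0 <= P w)%R) -> (forall w, 0 <= Z w) ->
  (forall w, alive w -> (P w)%:E <= Z w) ->
  \sum_w (Tlive d' s w * P w)%:E <=
    \sum_w (Tlive d s w)%:E * Z w + alpha%:E * \sum_w ((alive w)%:R)%:E * Z w.
Proof.
move=> /aliveP[sS s_act _] P0 Z0 PZ.
rewrite ge0_sume_distrr => [|w _]; last by rewrite mule_ge0 ?lee_fin.
rewrite -big_split /=; apply: lee_sum => w _; rewrite /Tlive.
case aw: (alive w); last by rewrite /= !(mulr0, mul0r, mul0e, mule0, adde0).
have [wS _ _] := aliveP aw; have [hT _ _] := bounded sS s_act wS.
rewrite !mulr1 mul1e -ge0_muleDl ?lee_fin ?Tm_ge0 // -EFinD EFinM.
apply: lee_pmul; rewrite ?lee_fin ?Tm_ge0 ?P0 ?PZ //.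
by have := le_trans (ler_norm _) hT; lra.
Qed.

Let D := alpha%:E * (1 + CB C K (pcost C K) d * (cardSp C K)%:E).
Local Notation X := (Eacc C K (pcost C K) d).
Local Notation Y := (Eacc C K (@pcount R S) d).
Hypothesis budget : 2%:E * alpha%:E * CB C K (@pcount R S) d * (cardSp C K)%:E <= 1.

Lemma partial_cost_le n s : Sprime C K s ->
  (partial_pay (pcost C K) d' s n)%:E <= X s + 2%:E * D * Y s.
Proof.
have X0 w : 0 <= X w := Eacc_ge0 w d_gt0 (cm_ge0 d_gt0).
have Y0 w : 0 <= Y w := Eacc_ge0 w d_gt0 (fun=> ler01).
have card0 : 0 <= (cardSp C K)%:E by rewrite lee_fin ler0n.
have D0 : 0 <= D by rewrite mule_ge0 ?lee_fin // adde_ge0 // mule_ge0 ?CB_ge0.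
have tD0 : 0 <= 2%:E * D by rewrite mule_ge0.
have Z0 w : 0 <= X w + 2%:E * D * Y w by apply: adde_ge0 => //; apply: mule_ge0.
pose M := CB C K (pcost C K) d + 2%:E * D * CB C K (@pcount R S) d.
have ZM w : Sprime C K w -> X w + 2%:E * D * Y w <= M.
  by move=> wS; rewrite leeD ?lee_wpmul2l ?Eacc_le_CB.
elim: n s => [|n IH] s sS; first by rewrite /partial_pay big_ord0.
rewrite partial_pay_succ; case sG: (s \in goal K); first by rewrite mul0r.
have s_alive : alive s by rewrite /alive sS sG.
have [_ s_act _] := aliveP s_alive.
have [_ hc _] := bounded sS s_act sS.
have P0 w : (0 <= partial_pay (pcost C K) d' w n)%R.
  by apply: sumr_ge0 => k _; apply: step_pay_ge0 => // u; apply: cm_ge0.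
have IH' w : alive w -> (partial_pay (pcost C K) d' w n)%:E <= X w + 2%:E * D * Y w.
  by case/aliveP => wS _ _; apply: IH.
have hsum := sum_Tlive_perturbed_le s_alive P0 Z0 IH'.
have M0 : 0 <= M := adde_ge0 (CB_ge0 _ _) (mule_ge0 tD0 (CB_ge0 _ _)).
have halive := sum_alive_le M0 Z0 ZM.
have hbudget : alpha%:E + alpha%:E * ((cardSp C K)%:E * M) <= 2%:E * D.
  by apply: budget_le; rewrite ?lee_fin ?CB_ge0.
rewrite mul1r EFinD -sumEFin Eacc_combination_bellman //.
apply: (le_trans (leeD (_ : _ <= (cm C K s (act C d s))%:E + alpha%:E) hsum)).
  by rewrite -EFinD lee_fin /pcost; lra.
rewrite [leLHS](AC (2*2) (1*3*(2*4))) [leRHS](AC (2*1) (1*3*2)) leeD //.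
by apply: le_trans hbudget; rewrite leeD // (lee_wpmul2l _ halive) ?lee_fin.
Qed.

Lemma Etot_perturbed_le :
  Etot C K d' <= Etot C K d + 2%:E * D * CB C K (@pcount R S) d.
Proof.
apply: lime_le.
  apply: is_cvg_nneseries => k _ _; rewrite lee_fin.
  by apply: step_pay_ge0 => // u; apply: cm_ge0.
apply: nearW => n; rewrite big_mkord sumEFin.
apply: le_trans (partial_cost_le n Sprime_sin) _.
rewrite leeD // lee_wpmul2l ?Eacc_le_CB ?Sprime_sin //.
by rewrite mule_ge0 // mule_ge0 ?lee_fin // adde_ge0 // mule_ge0 ?CB_ge0 ?lee_fin.
Qed.

End Perturbation.
End Bellman.

Theorem lemma2 (R : realType) (S : finType) (C : fdCTMC R S) (K : costs R S)
    (alpha : R) (d d' : S -> R) :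
  wf C K -> delay_fun C d -> delay_fun C d' ->
  0 <= alpha <= 1 ->
  alpha_bounded C K alpha d' d ->
  (2%:E * alpha%:E * CB C K (pcount (S:=S)) d * (cardSp C K)%:E <= 1)%E ->
  (Etot C K d' <= Etot C K d
     + 2%:E * alpha%:E * CB C K (pcount (S:=S)) d
         * (1 + CB C K (pcost C K) d * (cardSp C K)%:E))%E.
Proof.
move=> W dp dp' /andP[alpha_ge0 _] bounded budget.
rewrite [X in (_ + X)%E](AC (1*1*1*1) (1*(2*4)*3)).
exact: Etot_perturbed_le.
Qed.
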